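(* Let $G$ be a second countable locally compact group and $\Omega$ a homogeneous space of $G$. Let $F\subset P$ and $F\subset P'$ be closed subgroups of $G$, let $Y,Y'$ be closed subsets of $\Omega$ and let $M\subset G$. Suppose that (a) $PY=Y$ and $P'Y'=Y'$; (b) $mY\cap Y'\neq\emptyset$ for every $m\in M$; (c) $Y$ is a compact $F$-minimal subset. Then $hY\subset Y'$ for every $h\in N_G(F)\cap\overline{P'MP}$.
   Context: $N_G(F)$ denotes the normalizer of $F$ in $G$. For a closed subgroup $F\subset G$, a closed $F$-invariant subset $Y\subset\Omega$ is called $F$-minimal if it contains no proper nonempty closed $F$-invariant subset, i.e. $Fy$ is dense in $Y$ for every $y\in Y$. *)

From Stdlib Require Import List.

Set Implicit Arguments.

Record Topology (X : Type) := {
  opn : (X -> Prop) -> Prop;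
  opn_full : opn (fun _ => True);
  opn_inter : forall U V, opn U -> opn V -> opn (fun x => U x /\ V x);
  opn_union : forall (I : Type) (U : I -> X -> Prop),
      (forall i, opn (U i)) -> opn (fun x => exists i, U i x)
}.

Section Topo.
Variables (X : Type) (T : Topology X).

Definition subset (A B : X -> Prop) : Prop := forall x, A x -> B x.

Definition closed (A : X -> Prop) : Prop := opn T (fun x => ~ A x).

Definition closure (A : X -> Prop) (x : X) : Prop :=
  forall U, opn T U -> U x -> exists y, U y /\ A y.

Definition compact (K : X -> Prop) : Prop :=
  forall (I : Type) (U : I -> X -> Prop),
    (forall i, opn T (U i)) ->
    (forall x, K x -> exists i, U i x) ->
    exists l : list I, forall x, K x -> exists i, In i l /\ U i x.

Definition hausdorff : Prop :=
  forall x y, x <> y -> exists U V, opn T U /\ opn T V /\ U x /\ V y /\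
    forall z, U z -> V z -> False.

Definition locally_compact : Prop :=
  forall x, exists K U, compact K /\ opn T U /\ U x /\ subset U K.

Definition second_countable : Prop :=
  exists B : nat -> X -> Prop, (forall n, opn T (B n)) /\
    forall U x, opn T U -> U x -> exists n, B n x /\ subset (B n) U.
End Topo.

Definition continuous (X Y : Type) (TX : Topology X) (TY : Topology Y)
  (f : X -> Y) : Prop :=
  forall V, opn TY V -> opn TX (fun x => V (f x)).

Definition continuous2 (X Y Z : Type) (TX : Topology X) (TY : Topology Y)
  (TZ : Topology Z) (f : X -> Y -> Z) : Prop :=
  forall W x y, opn TZ W -> W (f x y) ->
    exists U V, opn TX U /\ opn TY V /\ U x /\ V y /\
      forall x' y', U x' -> V y' -> W (f x' y').

Definition open_map (X Y : Type) (TX : Topology X) (TY : Topology Y)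
  (f : X -> Y) : Prop :=
  forall U, opn TX U -> opn TY (fun y => exists x, U x /\ f x = y).

Definition is_group (G : Type) (mul : G -> G -> G) (inv : G -> G) (one : G)
  : Prop :=
  (forall a b c, mul a (mul b c) = mul (mul a b) c) /\
  (forall a, mul one a = a) /\ (forall a, mul a one = a) /\
  (forall a, mul (inv a) a = one) /\ (forall a, mul a (inv a) = one).

Definition is_topological_group (G : Type) (TG : Topology G)
  (mul : G -> G -> G) (inv : G -> G) (one : G) : Prop :=
  is_group mul inv one /\ hausdorff TG /\
  continuous2 TG TG TG mul /\ continuous TG TG inv.

Definition is_lcsc_group (G : Type) (TG : Topology G)
  (mul : G -> G -> G) (inv : G -> G) (one : G) : Prop :=
  is_topological_group TG mul inv one /\ locally_compact TG /\
  second_countable TG.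

Definition is_subgroup (G : Type) (mul : G -> G -> G) (inv : G -> G)
  (one : G) (H : G -> Prop) : Prop :=
  H one /\ (forall a b, H a -> H b -> H (mul a b)) /\
  (forall a, H a -> H (inv a)).

Definition is_closed_subgroup (G : Type) (TG : Topology G)
  (mul : G -> G -> G) (inv : G -> G) (one : G) (H : G -> Prop) : Prop :=
  is_subgroup mul inv one H /\ closed TG H.

Definition normalizer (G : Type) (mul : G -> G -> G) (inv : G -> G)
  (F : G -> Prop) (h : G) : Prop :=
  forall f, F f <-> F (mul h (mul f (inv h))).

Definition set_prod3 (G : Type) (mul : G -> G -> G) (A B C : G -> Prop)
  (g : G) : Prop :=
  exists a b c, A a /\ B b /\ C c /\ g = mul a (mul b c).

(* Omega is a homogeneous space of G: a Hausdorff G-space with a (jointly)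
   continuous transitive action whose orbit maps g |-> g.w are open; this
   is exactly the quotient G/H (H = Stab(w), closed) with quotient topology. *)
Definition is_homogeneous_space (G Om : Type) (TG : Topology G)
  (mul : G -> G -> G) (one : G) (TO : Topology Om) (act : G -> Om -> Om)
  : Prop :=
  hausdorff TO /\
  (forall w, act one w = w) /\
  (forall g h w, act (mul g h) w = act g (act h w)) /\
  continuous2 TG TO TO act /\
  (forall w w', exists g, act g w = w') /\
  (forall w, open_map TG TO (fun g => act g w)).

Definition act_set (G Om : Type) (act : G -> Om -> Om) (A : G -> Prop)
  (Y : Om -> Prop) (w : Om) : Prop :=
  exists a y, A a /\ Y y /\ w = act a y.

Definition set_eq (X : Type) (A B : X -> Prop) : Prop := forall x, A x <-> B x.

Definition invariant (G Om : Type) (act : G -> Om -> Om) (F : G -> Prop)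
  (Y : Om -> Prop) : Prop :=
  forall f y, F f -> Y y -> Y (act f y).

Definition minimal (G Om : Type) (TO : Topology Om) (act : G -> Om -> Om)
  (F : G -> Prop) (Y : Om -> Prop) : Prop :=
  closed TO Y /\ invariant act F Y /\
  forall Z : Om -> Prop, closed TO Z -> invariant act F Z -> subset Z Y ->
    (exists z, Z z) -> subset Y Z.

(* Meeting a closed set is a closed condition on g when Y is compact: by the
   tube lemma, if hY missed Y' then so would gY for all g near h, in
   particular for some g = p' m p in P'MP; but p' m p Y = p' m Y meets
   p' Y' = Y'. Hence Z = Y ∩ h^-1 Y' is nonempty, closed, and F-invariant
   because hFh^-1 = F ⊂ P' preserves Y'; by F-minimality Z = Y. *)

From Stdlib Require Import List Classical FunctionalExtensionality PropExtensionality.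

Section OpenSets.
Variables (X : Type) (T : Topology X).

Lemma opn_ext (A B : X -> Prop) : (forall x, A x <-> B x) -> opn T A -> opn T B.
Proof.
  intros HAB HA. replace B with A; [exact HA|].
  apply functional_extensionality; intro x; apply propositional_extensionality; auto.
Qed.

Lemma opn_list_inter (I : Type) (U : I -> X -> Prop) (l : list I) :
  (forall i, opn T (U i)) -> opn T (fun x => forall i, In i l -> U i x).
Proof.
  intros HU; induction l as [|a l IH].
  - apply (opn_ext (fun _ => True)); [|apply opn_full].
    intro x; split; [intros _ i []|auto].
  - apply (opn_ext (fun x => U a x /\ forall i, In i l -> U i x)).
    + intro x; split.
      * intros [Ha Hl] i [<-|Hi]; auto.
      * intros H; split; [apply H; left|intros i Hi; apply H; right]; auto.
    + apply opn_inter; auto.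
Qed.

Lemma opn_or (U V : X -> Prop) : opn T U -> opn T V -> opn T (fun x => U x \/ V x).
Proof.
  intros HU HV.
  apply (opn_ext (fun x => exists b : bool, if b then U x else V x)).
  - intro x; split.
    + intros [[|] H]; auto.
    + intros [H|H]; [exists true|exists false]; auto.
  - apply opn_union; intros [|]; auto.
Qed.

Lemma closed_and (A B : X -> Prop) :
  closed T A -> closed T B -> closed T (fun x => A x /\ B x).
Proof.
  intros HA HB. unfold closed.
  apply (opn_ext (fun x => ~ A x \/ ~ B x)).
  - intro x; split; [intros [H|H] [HAx HBx]; auto|].
    intro H; apply not_and_or; exact H.
  - apply opn_or; auto.
Qed.

End OpenSets.

Lemma closed_preimage (X Y : Type) (TX : Topology X) (TY : Topology Y)
  (f : X -> Y) (C : Y -> Prop) :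
  continuous TX TY f -> closed TY C -> closed TX (fun x => C (f x)).
Proof. intros Hf HC; exact (Hf _ HC). Qed.

Section JointlyContinuous.
Variables (X Y Z : Type) (TX : Topology X) (TY : Topology Y) (TZ : Topology Z)
  (f : X -> Y -> Z).
Hypothesis f_cont : continuous2 TX TY TZ f.

Lemma continuous2_slice (x : X) : continuous TY TZ (f x).
Proof.
  intros W HW.
  set (I := { V : Y -> Prop | opn TY V /\ forall y, V y -> W (f x y) }).
  apply (opn_ext _ TY (fun y => exists i : I, proj1_sig i y)).
  - intro y; split.
    + intros [i Vy]; exact (proj2 (proj2_sig i) y Vy).
    + intros Wy. destruct (f_cont W x y HW Wy) as [U [V [_ [HV [Ux [Vy HUV]]]]]].
      assert (Hi : opn TY V /\ forall y', V y' -> W (f x y')) by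
        (split; [exact HV|intros y' Vy'; apply HUV; auto]).
      exists (exist _ V Hi); exact Vy.
  - apply opn_union; intro i; exact (proj1 (proj2_sig i)).
Qed.

Lemma tube_compact (x : X) (K : Y -> Prop) (W : Z -> Prop) :
  compact TY K -> opn TZ W -> (forall y, K y -> W (f x y)) ->
  exists U, opn TX U /\ U x /\ forall x' y, U x' -> K y -> W (f x' y).
Proof.
  intros HK HW HxK.
  set (I := { p : (X -> Prop) * (Y -> Prop) |
              opn TX (fst p) /\ opn TY (snd p) /\ fst p x /\
              forall x' y, fst p x' -> snd p y -> W (f x' y) }).
  destruct (HK I (fun i => snd (proj1_sig i))) as [l Hl].
  - intro i; exact (proj1 (proj2 (proj2_sig i))).
  - intros y Ky.
    destruct (f_cont W x y HW (HxK y Ky)) as [U [V [HU [HV [Ux [Vy HUV]]]]]].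
    exists (exist _ (U, V) (conj HU (conj HV (conj Ux HUV)))); exact Vy.
  - exists (fun x' => forall i : I, In i l -> fst (proj1_sig i) x'); split; [|split].
    + apply opn_list_inter; intro i; exact (proj1 (proj2_sig i)).
    + intros i _; exact (proj1 (proj2 (proj2 (proj2_sig i)))).
    + intros x' y Hx' Ky.
      destruct (Hl y Ky) as [i [Hin Hi]].
      exact (proj2 (proj2 (proj2 (proj2_sig i))) x' y (Hx' i Hin) Hi).
Qed.

Lemma closure_compact_meet (S : X -> Prop) (K : Y -> Prop) (C : Z -> Prop) (x : X) :
  compact TY K -> closed TZ C -> closure TX S x ->
  (forall x', S x' -> exists y, K y /\ C (f x' y)) ->
  exists y, K y /\ C (f x y).
Proof.
  intros HK HC Hx HS. apply NNPP; intro Hmiss.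
  destruct (tube_compact x K (fun z => ~ C z) HK HC) as [U [HU [Ux HUK]]].
  { intros y Ky HCy; apply Hmiss; exists y; auto. }
  destruct (Hx U HU Ux) as [x' [Ux' Sx']].
  destruct (HS x' Sx') as [y [Ky HCy]].
  exact (HUK x' y Ux' Ky HCy).
Qed.

End JointlyContinuous.

Lemma minimal_subset_of_meet (G Om : Type) (TO : Topology Om) (act : G -> Om -> Om)
  (F : G -> Prop) (Y C : Om -> Prop) :
  minimal TO act F Y -> closed TO C -> invariant act F C ->
  (exists y, Y y /\ C y) -> subset Y C.
Proof.
  intros [HY [HFY Hmin]] HC HFC Hmeet y Yy.
  apply (Hmin (fun y => Y y /\ C y)); auto.
  - apply closed_and; auto.
  - intros g z Fg [Yz Cz]; split; auto.
  - intros z [Yz _]; exact Yz.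
Qed.

Section GroupAction.
Variables (G Om : Type) (mul : G -> G -> G) (inv : G -> G) (one : G)
  (act : G -> Om -> Om).
Hypothesis mul_inv_l : forall a, mul (inv a) a = one.
Hypothesis mul_inv_r : forall a, mul a (inv a) = one.
Hypothesis act_one : forall w, act one w = w.
Hypothesis act_mul : forall g h w, act (mul g h) w = act g (act h w).

Lemma invariant_of_act_set_eq (P : G -> Prop) (Y : Om -> Prop) :
  set_eq (act_set act P Y) Y -> invariant act P Y.
Proof. intros HPY p y Pp Yy; apply HPY; exists p, y; auto. Qed.

Lemma act_conj (h f : G) (y : Om) :
  act h (act f y) = act (mul h (mul f (inv h))) (act h y).
Proof. now rewrite !act_mul, <- (act_mul (inv h)), mul_inv_l, act_one. Qed.

Lemma invariant_preimage_normalizer (F P' : G -> Prop) (Y' : Om -> Prop) (h : G) :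
  normalizer mul inv F h -> subset F P' -> invariant act P' Y' ->
  invariant act F (fun y => Y' (act h y)).
Proof.
  intros Hh HFP' HY' f y Ff Y'hy.
  rewrite act_conj; apply HY'; [apply HFP', (proj1 (Hh f)) | ]; assumption.
Qed.

Lemma set_prod3_meet (P P' M : G -> Prop) (Y Y' : Om -> Prop) :
  (forall p, P p -> P (inv p)) -> invariant act P Y -> invariant act P' Y' ->
  (forall m, M m -> exists y, Y y /\ Y' (act m y)) ->
  forall g, set_prod3 mul P' M P g -> exists y, Y y /\ Y' (act g y).
Proof.
  intros HPinv HY HY' HM g [p' [m [p [P'p' [Mm [Pp ->]]]]]].
  destruct (HM m Mm) as [y [Yy Y'my]].
  exists (act (inv p) y); split; [apply HY; auto|].
  rewrite !act_mul, <- (act_mul p), mul_inv_r, act_one; apply HY'; assumption.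
Qed.

End GroupAction.

Theorem lemma3p2 (G Om : Type) (TG : Topology G) (mul : G -> G -> G)
  (inv : G -> G) (one : G) (TO : Topology Om) (act : G -> Om -> Om)
  (HG : is_lcsc_group TG mul inv one)
  (HOm : is_homogeneous_space TG mul one TO act)
  (F P P' : G -> Prop) (Y Y' : Om -> Prop) (M : G -> Prop)
  (HF : is_closed_subgroup TG mul inv one F)
  (HP : is_closed_subgroup TG mul inv one P)
  (HP' : is_closed_subgroup TG mul inv one P')
  (HFP : subset F P) (HFP' : subset F P')
  (HY : closed TO Y) (HY' : closed TO Y')
  (Ha : set_eq (act_set act P Y) Y /\ set_eq (act_set act P' Y') Y')
  (Hb : forall m, M m -> exists y, Y y /\ Y' (act m y))
  (Hc : compact TO Y /\ minimal TO act F Y) :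
  forall h, normalizer mul inv F h -> closure TG (set_prod3 mul P' M P) h ->
    subset (act_set act (fun g => g = h) Y) Y'.
Proof.
  intros h Hh Hcl.
  destruct HG as [[[_ [_ [_ [Hil Hir]]]] _] _].
  destruct HOm as [_ [Hact1 [Hactm [Hactc _]]]].
  destruct Ha as [HPY HP'Y'].
  apply invariant_of_act_set_eq in HPY, HP'Y'.
  destruct Hc as [Hcomp Hmin].
  destruct HP as [[_ [_ HPinv]] _].
  assert (Hmeet : exists y, Y y /\ Y' (act h y)).
  { apply (closure_compact_meet _ _ _ TG TO TO act Hactc (set_prod3 mul P' M P)); auto.
    apply (set_prod3_meet G Om mul inv one act Hir Hact1 Hactm); auto. }
  assert (HYh : subset Y (fun y => Y' (act h y))).
  { apply (minimal_subset_of_meet G Om TO act F); auto.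
    - apply (closed_preimage _ _ TO TO); [|exact HY'].
      exact (continuous2_slice _ _ _ TG TO TO act Hactc h).
    - apply (invariant_preimage_normalizer G Om mul inv one act Hil Hact1 Hactm F P'); auto. }
  intros w [g [y [-> [Yy ->]]]]; exact (HYh y Yy).
Qed.
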